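(* Let $P$ be a right LCM semigroup with identity and let $\vartheta$ be a right action of $P$ on a group $G$ by identity-preserving endomorphisms. Then the right semidirect product $P{}_\vartheta\!\ltimes G$ is a right LCM semigroup such that $J(P)\cong J(P{}_\vartheta\!\ltimes G)$ (via $pP\mapsto (pP)\times G$, $\emptyset\mapsto\emptyset$) and $(P{}_\vartheta\!\ltimes G)^*=P^*{}_\vartheta\!\ltimes G$. Moreover, $P{}_\vartheta\!\ltimes G$ is cancellative if and only if $P$ is cancellative and every $\vartheta_p$, $p\in P$, is injective.
   Context: A right LCM semigroup is a left cancellative semigroup $P$ with identity $e$ such that for all $p,q\in P$ either $pP\cap qP=\emptyset$ or $pP\cap qP=rP$ for some $r\in P$; $J(P)=\{pP:p\in P\}\cup\{\emptyset\}$ is its semilattice of principal right ideals (under intersection) and $P^*$ its group of invertible elements. A right action of $P$ on $G$ is a unital semigroup antihomomorphism $\vartheta:P\to\operatorname{End}G$, i.e. $\vartheta_e=\mathrm{id}$ and $\vartheta_p\vartheta_q=\vartheta_{qp}$. The right semidirect product $P{}_\vartheta\!\ltimes G$ is the set $P\times G$ with multiplication $(p,g)(q,h)=(pq,\vartheta_q(g)h)$. Cancellative means both left and right cancellative. *)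

Section Defs.
Context {P : Type}.

Definition seteq (X Y : P -> Prop) : Prop := forall x, X x <-> Y x.
Definition setI (X Y : P -> Prop) : P -> Prop := fun x => X x /\ Y x.
Definition set0 : P -> Prop := fun _ => False.

Definition is_monoid (mul : P -> P -> P) (e : P) : Prop :=
  (forall p q r, mul (mul p q) r = mul p (mul q r)) /\
  (forall p, mul e p = p) /\ (forall p, mul p e = p).

Definition left_cancellative (mul : P -> P -> P) : Prop :=
  forall p q r, mul p q = mul p r -> q = r.
Definition right_cancellative (mul : P -> P -> P) : Prop :=
  forall p q r, mul q p = mul r p -> q = r.
Definition cancellative (mul : P -> P -> P) : Prop :=
  left_cancellative mul /\ right_cancellative mul.

Definition rideal (mul : P -> P -> P) (p : P) : P -> Prop :=
  fun x => exists q, x = mul p q.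

Definition right_LCM (mul : P -> P -> P) (e : P) : Prop :=
  is_monoid mul e /\ left_cancellative mul /\
  forall p q, seteq (setI (rideal mul p) (rideal mul q)) set0 \/
              exists r, seteq (setI (rideal mul p) (rideal mul q)) (rideal mul r).

Definition inJ (mul : P -> P -> P) (X : P -> Prop) : Prop :=
  seteq X set0 \/ exists p, seteq X (rideal mul p).

Definition is_unit (mul : P -> P -> P) (e : P) (x : P) : Prop :=
  exists y, mul x y = e /\ mul y x = e.

Definition is_group (mul : P -> P -> P) (one : P) (inv : P -> P) : Prop :=
  is_monoid mul one /\ (forall g, mul (inv g) g = one) /\ (forall g, mul g (inv g) = one).

End Defs.

Definition is_endo {G : Type} (mulG : G -> G -> G) (oneG : G) (f : G -> G) : Prop :=
  (forall g h, f (mulG g h) = mulG (f g) (f h)) /\ f oneG = oneG.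

Definition injective {A B : Type} (f : A -> B) : Prop := forall x y, f x = f y -> x = y.

Definition right_action {P G : Type} (mulP : P -> P -> P) (e : P)
    (mulG : G -> G -> G) (oneG : G) (theta : P -> G -> G) : Prop :=
  (forall p, is_endo mulG oneG (theta p)) /\
  (forall g, theta e g = g) /\
  (forall p q g, theta p (theta q g) = theta (mulP q p) g).

Definition sd_mul {P G : Type} (mulP : P -> P -> P) (mulG : G -> G -> G)
    (theta : P -> G -> G) (x y : P * G) : P * G :=
  (mulP (fst x) (fst y), mulG (theta (fst y) (snd x)) (snd y)).

Definition prodG {P G : Type} (X : P -> Prop) : P * G -> Prop := fun x => X (fst x).


(* Since G is a group, the second coordinate of a right multiple (p, g)(q, h)
   = (pq, theta_q(g) h) can be made arbitrary, so the principal right ideal of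
   (p, g) is pP x G.  Hence intersections of principal right ideals, and with
   them the LCM property and the semilattice J, are computed in P alone.  The
   inverse of (p, g) for a unit p is (p^-1, theta_(p^-1)(g)^-1), and
   (left/right) cancellation splits into cancellation in each coordinate,
   where right cancellation in the second coordinate amounts to injectivity
   of theta_p. *)

Section Group.
Local Set Implicit Arguments.
Variables (G : Type) (mulG : G -> G -> G) (oneG : G) (invG : G -> G).
Hypothesis hG : is_group mulG oneG invG.

Lemma group_cancel_l g h k : mulG g h = mulG g k -> h = k.
Proof.
  destruct hG as [[A [L _]] [IL _]]. intro H.
  rewrite <- (L h), <- (L k), <- (IL g), !A, H. reflexivity.
Qed.

Lemma group_cancel_r g h k : mulG h g = mulG k g -> h = k.
Proof.
  destruct hG as [[A [_ R]] [_ IR]]. intro H.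
  rewrite <- (R h), <- (R k), <- (IR g), <- !A, H. reflexivity.
Qed.

Lemma endo_inv (f : G -> G) : is_endo mulG oneG f -> forall g, f (invG g) = invG (f g).
Proof.
  destruct hG as [_ [IL _]]. intros [fM f1] g.
  apply group_cancel_r with (g := f g). rewrite <- fM, !IL. exact f1.
Qed.

End Group.

Section SetsTimesG.
Variables (P G : Type).

Lemma prodG_setI (X Y : P -> Prop) :
  seteq (@prodG P G (setI X Y)) (setI (prodG X) (prodG Y)).
Proof. intro x. unfold prodG, setI. tauto. Qed.

Lemma prodG_set0 : seteq (@prodG P G set0) set0.
Proof. intro x. unfold prodG, set0. tauto. Qed.

Lemma prodG_seteq_inj (g : G) (X Y : P -> Prop) :
  seteq (@prodG P G X) (prodG Y) -> seteq X Y.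
Proof. intros H p. exact (H (p, g)). Qed.

End SetsTimesG.

Section SemidirectProduct.
Local Set Implicit Arguments.
Variables (P G : Type) (mulP : P -> P -> P) (e : P).
Variables (mulG : G -> G -> G) (oneG : G) (invG : G -> G) (theta : P -> G -> G).
Hypothesis hG : is_group mulG oneG invG.
Hypothesis htheta : right_action mulP e mulG oneG theta.

Local Notation sd := (sd_mul mulP mulG theta).

Lemma sd_monoid : is_monoid mulP e -> is_monoid sd (e, oneG).
Proof.
  destruct hG as [[A [L R]] _]. destruct htheta as [TE [TId TC]].
  intros [PA [PL PR]]. split; [|split].
  - intros [p g] [q h] [r k]; unfold sd_mul; simpl.
    rewrite PA, (proj1 (TE r)), TC, A. reflexivity.
  - intros [p g]; unfold sd_mul; simpl. rewrite PL, (proj2 (TE p)), L. reflexivity.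
  - intros [p g]; unfold sd_mul; simpl. rewrite PR, TId, R. reflexivity.
Qed.

Lemma sd_left_cancellative : left_cancellative mulP -> left_cancellative sd.
Proof.
  intros PLC [p g] [q h] [r k]; unfold sd_mul; simpl. intro E.
  injection E as E1 E2. apply PLC in E1. subst r.
  apply (group_cancel_l hG) in E2. subst k. reflexivity.
Qed.

Lemma sd_right_cancellative_iff :
  right_cancellative sd <-> right_cancellative mulP /\ forall p, injective (theta p).
Proof.
  split.
  - intro RC. split.
    + intros p q r E.
      assert (H : sd (q, oneG) (p, oneG) = sd (r, oneG) (p, oneG)).
      { unfold sd_mul; simpl. rewrite E. reflexivity. }
      apply RC in H. injection H as H. exact H.
    + intros p g k E.
      assert (H : sd (p, g) (p, oneG) = sd (p, k) (p, oneG)).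
      { unfold sd_mul; simpl. rewrite E. reflexivity. }
      apply RC in H. injection H as H. exact H.
  - intros [PRC TI] [p g] [q h] [r k]; unfold sd_mul; simpl. intro E.
    injection E as E1 E2. apply PRC in E1. subst r.
    apply (group_cancel_r hG), TI in E2. subst k. reflexivity.
Qed.

Lemma rideal_sd (p : P) (g : G) : seteq (rideal sd (p, g)) (prodG (rideal mulP p)).
Proof.
  destruct hG as [[A [L _]] [_ IR]].
  intros [x k]; unfold prodG, rideal, sd_mul; simpl; split.
  - intros [[q h] E]. injection E as E _. exists q. exact E.
  - intros [q E]. subst x. exists (q, mulG (invG (theta q g)) k).
    simpl. rewrite <- A, IR, L. reflexivity.
Qed.

Lemma rideal_sd_setI (p q : P) (g h : G) :
  seteq (setI (rideal sd (p, g)) (rideal sd (q, h)))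
        (prodG (setI (rideal mulP p) (rideal mulP q))).
Proof.
  intro x. pose proof (rideal_sd p g x). pose proof (rideal_sd q h x).
  unfold setI, prodG in *. tauto.
Qed.

Lemma sd_right_LCM : right_LCM mulP e -> right_LCM sd (e, oneG).
Proof.
  intros [PM [PLC PLCM]]. split; [|split].
  - exact (sd_monoid PM).
  - exact (sd_left_cancellative PLC).
  - intros [p g] [q h]. pose proof (rideal_sd_setI p q g h) as I.
    destruct (PLCM p q) as [H | [r H]]; [left | right; exists (r, oneG)];
      intros [x k]; specialize (I (x, k)); specialize (H x).
    + unfold set0, prodG in *. tauto.
    + pose proof (rideal_sd r oneG (x, k)). unfold prodG in *. tauto.
Qed.

Lemma inJ_prodG_rideal (p : P) : inJ sd (prodG (rideal mulP p)).
Proof.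
  right. exists (p, oneG). intro x. pose proof (rideal_sd p oneG x). tauto.
Qed.

Lemma inJ_sd_prodG (Y : P * G -> Prop) :
  inJ sd Y -> exists X, inJ mulP X /\ seteq Y (prodG X).
Proof.
  intros [H | [[p g] H]].
  - exists set0. split; [left; intro; tauto|]. intro x. exact (H x).
  - exists (rideal mulP p). split; [right; exists p; intro; tauto|].
    intro x. pose proof (H x). pose proof (rideal_sd p g x). tauto.
Qed.

Lemma sd_unit (x : P * G) : is_unit sd (e, oneG) x <-> is_unit mulP e (fst x).
Proof.
  destruct x as [p g]; simpl. split.
  - intros [[q h] [E1 E2]]. unfold sd_mul in *; simpl in *.
    injection E1 as F1 _. injection E2 as F2 _. exists q. split; assumption.
  - destruct htheta as [TE [TId TC]]. destruct hG as [_ [IL IR]].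
    intros [q [E1 E2]]. exists (q, invG (theta q g)).
    unfold sd_mul; simpl. rewrite E1, E2, IR. split; [reflexivity|].
    rewrite (endo_inv hG (TE p)), TC, E2, TId, IL. reflexivity.
Qed.

End SemidirectProduct.

Theorem mainTheorem18 (P G : Type) (mulP : P -> P -> P) (e : P)
  (mulG : G -> G -> G) (oneG : G) (invG : G -> G) (theta : P -> G -> G)
  (hP : right_LCM mulP e) (hG : is_group mulG oneG invG)
  (htheta : right_action mulP e mulG oneG theta) :
  (* P x_theta G is a right LCM semigroup with identity (e, 1) *)
  right_LCM (sd_mul mulP mulG theta) (e, oneG) /\
  (* J(P) ~ J(P x_theta G) via X |-> X x G (pP |-> pP x G, empty |-> empty) *)
  ((forall p : P, inJ (sd_mul mulP mulG theta) (@prodG P G (rideal mulP p))) /\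
   seteq (@prodG P G set0) set0 /\
   (forall Y, inJ (sd_mul mulP mulG theta) Y ->
      exists X, inJ mulP X /\ seteq Y (@prodG P G X)) /\
   (forall X Y, inJ mulP X -> inJ mulP Y ->
      seteq (@prodG P G X) (@prodG P G Y) -> seteq X Y) /\
   (forall X Y : P -> Prop,
      seteq (@prodG P G (setI X Y)) (setI (@prodG P G X) (@prodG P G Y)))) /\
  (* (P x_theta G)^* = P^* x_theta G *)
  (forall (x : P * G), is_unit (sd_mul mulP mulG theta) (e, oneG) x <->
                       is_unit mulP e (fst x)) /\
  (* cancellativity *)
  (cancellative (sd_mul mulP mulG theta) <->
   (cancellative mulP /\ forall p, injective (theta p))).
Proof.
  assert (PLC : left_cancellative mulP) by apply hP.
  split; [|split; [|split]].
  - exact (sd_right_LCM hG htheta hP).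
  - split; [|split; [|split; [|split]]].
    + exact (inJ_prodG_rideal mulP theta hG).
    + exact (prodG_set0 P G).
    + exact (inJ_sd_prodG hG).
    + intros X Y _ _. exact (prodG_seteq_inj P G oneG X Y).
    + exact (prodG_setI P G).
  - exact (sd_unit hG htheta).
  - pose proof (sd_left_cancellative (theta := theta) hG PLC).
    pose proof (sd_right_cancellative_iff mulP theta hG).
    unfold cancellative. tauto.
Qed.
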